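(* Let $d\ge1$. As an identity of rational functions in $s_1,\dots,s_d,t_1,\dots,t_d$ (in particular for all integer vectors $\vec s,\vec t$ at which all denominators on both sides are nonzero), $$\sum_{\sigma,\tau\in\mathcal{S}_d}\frac{\operatorname{sgn}\sigma\,\operatorname{sgn}\tau}{\prod_{i=1}^d\left(d+1-i+\sum_{j=i}^d\left(s_{\sigma(j)}+t_{\tau(j)}\right)\right)}=\prod_{1\le i<j\le d}(s_i-s_j)(t_i-t_j)\prod_{i,j=1}^d\frac{1}{1+s_i+t_j}.$$
   Context: $\mathcal{S}_d$ is the symmetric group on $\{1,\dots,d\}$ and $\operatorname{sgn}$ the sign of a permutation. *)

From HB Require Import structures.
From mathcomp Require Import all_boot all_order all_algebra all_fingroup.
Set Implicit Arguments. Unset Strict Implicit. Unset Printing Implicit Defensive.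
Import Order.TTheory GRing.Theory Num.Theory.
Local Open Scope ring_scope.

(* Indices are 0-based: i : 'I_d stands for the paper's index i+1, so the
   paper's  d+1-(i+1) = d-i. *)
Definition lhs_factor (R : numFieldType) (d : nat) (s t : 'I_d -> R)
  (sigma tau : 'S_d) (i : 'I_d) : R :=
  (d - i)%:R + \sum_(j : 'I_d | (i <= j)%N) (s (sigma j) + t (tau j)).

Definition lhs_denom (R : numFieldType) (d : nat) (s t : 'I_d -> R)
  (sigma tau : 'S_d) : R :=
  \prod_(i : 'I_d) lhs_factor s t sigma tau i.

(* Write x i j = 1 + s i + t j, so that the i-th factor of the denominator is the
   suffix sum x (sigma i) (tau i) + ... + x (sigma d) (tau d).  Substituting
   tau = sigma * rho, the double sum becomes \sum_rho sgn rho \sum_sigma of a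
   product of inverse suffix sums of y k = x k (rho k) permuted by sigma, and the
   partial-fraction identity
     \sum_sigma \prod_i (y (sigma i) + ... + y (sigma d))^-1 = \prod_k (y k)^-1
   collapses the inner sum.  What remains is the Leibniz expansion of
   det (1 / (1 + s i + t j)), which Cauchy's determinant formula evaluates. *)

From mathcomp Require Import all_boot all_order all_algebra all_fingroup.
From mathcomp Require Import ring.
Set Implicit Arguments. Unset Strict Implicit. Unset Printing Implicit Defensive.
Import GRing.Theory.
Local Open Scope ring_scope.

Lemma big_lift_perm (V : nmodType) n (F : 'S_n.+1 -> V) :
  \sum_(s : 'S_n.+1) F s = \sum_(k : 'I_n.+1) \sum_(s : 'S_n) F (lift_perm ord0 k s).
Proof.
pose h (p : 'I_n.+1 * 'S_n) := lift_perm ord0 p.1 p.2.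
have h_inj : injective h.
  move=> [k s] [k' s']; rewrite /h /= => eq_h.
  have eq_k : k = k' by rewrite -(lift_perm_id ord0 k s) eq_h lift_perm_id.
  subst k'; congr (_, _); apply/permP => j.
  by apply: (@lift_inj _ k); rewrite -!(lift_perm_lift ord0) eq_h.
have h_bij : bijective h.
  by apply: (inj_card_bij h_inj); rewrite card_prod !card_Sn card_ord factS.
by rewrite pair_bigA (reindex h) //; exact: onW_bij.
Qed.

Section PartialFractions.
Variable F : fieldType.

Lemma suffix_sum_lift_perm n (y : 'I_n.+1 -> F) k (s : 'S_n) (i : 'I_n) :
  \sum_(j : 'I_n.+1 | (lift ord0 i <= j)%N) y (lift_perm ord0 k s j)
  = \sum_(j : 'I_n | (i <= j)%N) y (lift k (s j)).
Proof.
rewrite big_mkcond big_ord_recl /= add0r [RHS]big_mkcond.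
by apply: eq_bigr => j _; rewrite lift_perm_lift /bump !leq0n !add1n ltnS.
Qed.

(* Every s contributes the factor (y 0 + ... + y n)^-1 at i = 0; grouping the
   s by k = s 0, induction turns the remaining factors into \prod_(l != k) (y l)^-1,
   and \sum_k y k * \prod_l (y l)^-1 cancels that first factor. *)
Lemma sum_perm_prod_suffix_sum_inv n (y : 'I_n -> F) :
  (forall (s : 'S_n) (i : 'I_n), \sum_(j : 'I_n | (i <= j)%N) y (s j) != 0) ->
  \sum_(s : 'S_n) \prod_(i : 'I_n) (\sum_(j : 'I_n | (i <= j)%N) y (s j))^-1
  = \prod_k (y k)^-1.
Proof.
elim: n y => [|n IH] y y_suffix_neq0.
  rewrite big_ord0 (eq_bigr (fun=> 1)) => [|s _]; last exact: big_ord0.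
  by rewrite sumr_const card_Sn.
have sum_y_neq0 : \sum_k y k != 0.
  by have := y_suffix_neq0 1%g ord0; under eq_bigr do rewrite perm1.
have y_neq0 k : y k != 0.
  have := y_suffix_neq0 (tperm k ord_max) ord_max.
  rewrite (big_pred1 ord_max) ?tpermR // => j /=.
  by rewrite -val_eqE /= eqn_leq leq_ord.
have sum_y_perm (s : 'S_n.+1) :
    \sum_(j : 'I_n.+1 | (@ord0 n <= j)%N) y (s j) = \sum_j y j.
  by rewrite (eq_bigl predT) // [RHS](reindex_inj (@perm_inj _ s)).
have group_by_head (k : 'I_n.+1) : \sum_(s : 'S_n) \prod_(i : 'I_n.+1)
      (\sum_(j : 'I_n.+1 | (i <= j)%N) y (lift_perm ord0 k s j))^-1
    = (\sum_j y j)^-1 * (y k * \prod_l (y l)^-1).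
  transitivity (\sum_(s : 'S_n) (\sum_j y j)^-1 *
      \prod_(i : 'I_n) (\sum_(j : 'I_n | (i <= j)%N) y (lift k (s j)))^-1).
    apply: eq_bigr => s _; rewrite big_ord_recl sum_y_perm.
    by congr (_ * _); apply: eq_bigr => i _; rewrite suffix_sum_lift_perm.
  rewrite -mulr_sumr (IH (fun j => y (lift k j))) => [|s i]; last first.
    have := y_suffix_neq0 (lift_perm ord0 k s) (lift ord0 i).
    by rewrite suffix_sum_lift_perm.
  by rewrite [X in _ * (_ * X)](bigD1_ord k) //= (mulrA (y k)) mulfV ?mul1r.
rewrite big_lift_perm (eq_bigr _ (fun k _ => group_by_head k)) -mulr_sumr.
by rewrite -mulr_suml mulrA mulVf ?mul1r.
Qed.

End PartialFractions.

Section CauchyDeterminant.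
Variable F : fieldType.

Lemma det_pivot00 n (A : 'M[F]_n.+1) : A 0 0 != 0 ->
  \det A = A 0 0 * \det (\matrix_(i, j) (A (lift 0 i) (lift 0 j)
                           - A (lift 0 i) 0 * A 0 (lift 0 j) / A 0 0)).
Proof.
move: A; rewrite -[n.+1]/(1 + n)%N => A A00_neq0.
pose L := block_mx (1%:M : 'M[F]_1) 0 (- (A 0 0)^-1 *: dlsubmx A) 1%:M.
have detL : \det L = 1 by rewrite det_lblock !det1 mulr1.
have lshift0 : lshift n (0 : 'I_1) = 0 :> 'I_n.+1 by apply: val_inj.
have ulA : ulsubmx A = (A 0 0)%:M.
  by rewrite [ulsubmx A]mx11_scalar !mxE lshift0.
rewrite -[LHS]mul1r -detL -det_mulmx -[A in L *m A]submxK mulmx_block.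
rewrite !mul1mx !mul0mx !addr0 ulA mul_mx_scalar scalerA mulrN mulfV //.
rewrite scaleN1r addNr det_ublock det_mx11 mxE eqxx mulr1n; congr (_ * \det _).
apply/matrixP => i j; rewrite !mxE big_ord1 !mxE.
have rshift1 (k : 'I_n) : rshift 1 k = lift 0 k :> 'I_(1 + n) by apply: val_inj.
rewrite !rshift1 lshift0; ring.
Qed.

Lemma det_scale_rows_cols n (r c : 'I_n -> F) (M : 'M[F]_n) :
  \det (\matrix_(i, j) (r i * c j * M i j)) = (\prod_i r i) * (\prod_j c j) * \det M.
Proof.
have -> : \matrix_(i, j) (r i * c j * M i j)
          = diag_mx (\row_i r i) *m M *m diag_mx (\row_j c j).
  by apply/matrixP => i j; rewrite mul_mx_diag mul_diag_mx !mxE mulrAC.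
rewrite !det_mulmx !det_diag mulrAC.
by congr (_ * _ * _); apply: eq_bigr => i _; rewrite mxE.
Qed.

Definition vandermonde_prod n (a b : 'I_n -> F) :=
  \prod_(i : 'I_n) \prod_(j : 'I_n | (i < j)%N) ((a i - a j) * (b i - b j)).

Definition inv_sum_prod n (a b : 'I_n -> F) :=
  \prod_(i : 'I_n) \prod_(j : 'I_n) (a i + b j)^-1.

Lemma vandermonde_prodS n (a b : 'I_n.+1 -> F) :
  vandermonde_prod a b
  = \prod_(j : 'I_n) ((a 0 - a (lift 0 j)) * (b 0 - b (lift 0 j)))
    * vandermonde_prod (a \o lift 0) (b \o lift 0).
Proof.
rewrite /vandermonde_prod big_ord_recl; congr (_ * _).
  by rewrite big_mkcond big_ord_recl /= mul1r.
apply: eq_bigr => i _; rewrite big_mkcond big_ord_recl /= mul1r [RHS]big_mkcond.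
by apply: eq_bigr => j _; rewrite /bump !leq0n !add1n ltnS.
Qed.

Lemma inv_sum_prodS n (a b : 'I_n.+1 -> F) :
  inv_sum_prod a b
  = (a 0 + b 0)^-1 * \prod_(j : 'I_n) (a 0 + b (lift 0 j))^-1
    * \prod_(i : 'I_n) (a (lift 0 i) + b 0)^-1
    * inv_sum_prod (a \o lift 0) (b \o lift 0).
Proof.
rewrite /inv_sum_prod big_ord_recl big_ord_recl -!mulrA; congr (_ * (_ * _)).
by rewrite -big_split; apply: eq_bigr => i _; rewrite big_ord_recl.
Qed.

Lemma det_cauchy n (a b : 'I_n -> F) : (forall i j, a i + b j != 0) ->
  \det (\matrix_(i, j) (a i + b j)^-1) = vandermonde_prod a b * inv_sum_prod a b.
Proof.
elim: n a b => [|n IH] a b ab_neq0.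
  by rewrite det_mx00 /vandermonde_prod /inv_sum_prod !big_ord0 mulr1.
rewrite det_pivot00 ?mxE ?invr_eq0 //.
set a' := a \o lift 0; set b' := b \o lift 0.
pose r i := (a' i - a 0) / (a' i + b 0).
pose c j := (b' j - b 0) / (a 0 + b' j).
(* The Schur complement of the pivot is again a Cauchy matrix, with rows and
   columns rescaled by [r] and [c]. *)
rewrite (_ : \matrix_(i, j) _ = \matrix_(i, j)
                 (r i * c j * (\matrix_(i, j) (a' i + b' j)^-1) i j)); last first.
  apply/matrixP => i j; rewrite !mxE /r /c /a' /b' /=.
  have := ab_neq0 (lift 0 i) (lift 0 j); have := ab_neq0 (lift 0 i) 0.
  have := ab_neq0 0 (lift 0 j); have := ab_neq0 0 0.
  by move=> h00 h0j hi0 hij; field; rewrite h00 h0j hi0 hij oner_neq0.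
rewrite det_scale_rows_cols IH => [|i j]; last exact: ab_neq0.
have flip : \prod_(j < n) ((a 0 - a (lift 0 j)) * (b 0 - b (lift 0 j)))
            = \prod_(j < n) ((a' j - a 0) * (b' j - b 0)).
  by apply: eq_bigr => j _; rewrite -mulrNN !opprB.
by rewrite vandermonde_prodS inv_sum_prodS flip /r /c !big_split /=; ring.
Qed.

End CauchyDeterminant.

Lemma sum_perm2_suffix_sums_det (F : fieldType) n (x : 'I_n -> 'I_n -> F) :
  (forall (sg tu : 'S_n) (i : 'I_n),
     \sum_(j : 'I_n | (i <= j)%N) x (sg j) (tu j) != 0) ->
  \sum_(sg : 'S_n) \sum_(tu : 'S_n) (-1) ^+ sg * (-1) ^+ tu
     / \prod_(i : 'I_n) \sum_(j : 'I_n | (i <= j)%N) x (sg j) (tu j)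
  = \det (\matrix_(i, j) (x i j)^-1).
Proof.
move=> x_suffix_neq0.
under eq_bigr => sg _ do rewrite (reindex_inj (mulgI sg)).
rewrite exchange_big; apply: eq_bigr => rho _.
have rho_suffix_neq0 (sg : 'S_n) (i : 'I_n) :
    \sum_(j : 'I_n | (i <= j)%N) x (sg j) (rho (sg j)) != 0.
  by have := x_suffix_neq0 sg (sg * rho)%g i; under eq_bigr do rewrite permM.
under [in RHS]eq_bigr do rewrite mxE.
rewrite -(sum_perm_prod_suffix_sum_inv (y := fun k => x k (rho k))) //.
rewrite mulr_sumr; apply: eq_bigr => sg _.
rewrite odd_permM signr_addb signrMK -prodfV; congr (_ * _).
by apply: eq_bigr => i _; under eq_bigr do rewrite permM.
Qed.

Lemma lhs_factorE (R : numFieldType) d (s t : 'I_d -> R) (sg tu : 'S_d) (i : 'I_d) :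
  lhs_factor s t sg tu i = \sum_(j : 'I_d | (i <= j)%N) (1 + s (sg j) + t (tu j)).
Proof.
rewrite /lhs_factor; have -> : (d - i)%:R = \sum_(j : 'I_d | (i <= j)%N) (1 : R).
  by rewrite -[RHS](@big_geq_mkord _ 0 +%R i d xpredT (fun=> 1)) sumr_const_nat.
by rewrite -big_split; apply: eq_bigr => j _; rewrite /= addrA.
Qed.

Theorem mainTheorem3 (R : numFieldType) (d : nat) (hd : (0 < d)%N)
  (s t : 'I_d -> R)
  (hden : forall (sigma tau : 'S_d) (i : 'I_d), lhs_factor s t sigma tau i != 0)
  (hden2 : forall i j : 'I_d, 1 + s i + t j != 0) :
  \sum_(sigma : 'S_d) \sum_(tau : 'S_d)
     ((-1) ^+ sigma * (-1) ^+ tau) / lhs_denom s t sigma tau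
  = (\prod_(i : 'I_d) \prod_(j : 'I_d | (i < j)%N) ((s i - s j) * (t i - t j)))
    * \prod_(i : 'I_d) \prod_(j : 'I_d) (1 + s i + t j)^-1.
Proof.
rewrite /lhs_denom.
under eq_bigr do under eq_bigr do under eq_bigr do rewrite lhs_factorE.
rewrite (sum_perm2_suffix_sums_det (x := fun i j => 1 + s i + t j)); last first.
  by move=> sg tu i; rewrite -lhs_factorE.
rewrite (det_cauchy (a := fun i => 1 + s i)) //; congr (_ * _).
by apply: eq_bigr => i _; apply: eq_bigr => j _; rewrite opprD addrACA subrr add0r.
Qed.
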